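(* Let $n\ge 2$, $c\ge 4$, $\Delta>0$, $d\le n$, and let $\hat V$ be a family of at most $n$ vectors in $\mathbb{R}^d$ such that every vertex has expected degree at most $c$ in $G\sim\mathcal{G}_{\hat V}$ and the expected number of triangles in $G\sim\mathcal{G}_{\hat V}$ is at least $\Delta n$. Assume moreover that $10c^3d\le \Delta n/\lg^2 n$ and $\Delta n/\lg^2 n+4\le \Delta n/2$. Let $V'\subseteq \hat V$ be the subfamily of vectors whose Euclidean length lies in $[n^{-2},2\sqrt n]$. Then every vertex has expected degree at most $c$ in $G\sim\mathcal{G}_{V'}$, and the expected number of triangles in $G\sim\mathcal{G}_{V'}$ is at least $\Delta n/2$.
   Context: For a finite family of vectors $W=(\vec w_i)_{i\in I}$ in $\mathbb{R}^d$, $\mathcal{G}_W$ is the distribution on simple undirected graphs with vertex set $I$ in which, independently for each unordered pair $\{i,j\}$ with $i\neq j$, the edge $(i,j)$ is present with probability $\max(0,\min(\vec w_i\cdot\vec w_j,1))$. The expected degree of $i$ is $\sum_{j\ne i}\max(0,\min(\vec w_i\cdot\vec w_j,1))$. A triangle is a set of three distinct pairwise adjacent vertices. $\lg$ is the base-2 logarithm. *)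

From Stdlib Require Import Reals.
From mathcomp Require Import all_boot.
Set Implicit Arguments. Unset Strict Implicit. Unset Printing Implicit Defensive.

Local Open Scope R_scope.

Definition lg (x : R) : R := ln x / ln 2.

Definition dotR (d : nat) (u v : 'I_d -> R) : R :=
  \big[Rplus/0]_(k < d) (u k * v k).
Definition normR (d : nat) (u : 'I_d -> R) : R := sqrt (dotR u u).

Section RandomGraph.
Variables (I : finType) (d : nat) (W : I -> 'I_d -> R).

Definition edgeP (i j : I) : R := Rmax 0 (Rmin (dotR (W i) (W j)) 1).

(* The subfamily (W_i)_{i in S}, S : {set I}, is the family considered.
   Unordered pairs {i,j}, i <> j, of vertices in S: *)
Definition pairs (S : {set I}) : {set {set I}} :=
  [set e : {set I} | (e \subset S) && (#|e| == 2)%N].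

Definition pairP (e : {set I}) : R :=
  match enum e with [:: i; j] => edgeP i j | _ => 0 end.

Definition graphProb (S : {set I}) (E : {set {set I}}) : R :=
  \big[Rmult/1]_(e in pairs S) (if e \in E then pairP e else 1 - pairP e).

Definition triangles (S : {set I}) (E : {set {set I}}) : {set {set I}} :=
  [set T : {set I} | [&& T \subset S, #|T| == 3%N
     & [forall e : {set I}, ((e \subset T) && (#|e| == 2)%N) ==> (e \in E)]]].

Definition expTriangles (S : {set I}) : R :=
  \big[Rplus/0]_(E in powerset (pairs S))
     (graphProb S E * INR #|triangles S E|).

Definition expDegree (S : {set I}) (i : I) : R :=
  \big[Rplus/0]_(j in S | j != i) edgeP i j.

End RandomGraph.

From Stdlib Require Import Reals Lra.
From HB Require Import structures.
From mathcomp Require Import all_boot.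
Set Implicit Arguments. Unset Strict Implicit. Unset Printing Implicit Defensive.
Local Open Scope R_scope.

(* Writing the expected number of triangles as a sum over 3-sets of the products
   of their three edge probabilities, passing to V' loses only the triangles with
   a vertex outside V'.  Charge each of them to a long vertex (length > 2 sqrt n)
   if it has one, and otherwise to a short vertex (length < n^-2).  A long vertex
   is charged at most its squared degree <= c^2.  A short vertex is charged only
   triangles whose other vertices are not long, whose edges at the short vertex
   have probability at most 2 n^(-3/2); so it is charged at most 4/n.
   There are at most 4d(1+c) long vectors: their normalised Gram matrix G has
   rank at most d, so m^2 <= d sum G_ij^2, while sum G_ij >= 0 and
   G_ij^2 + G_ij <= 2 p_ij + 1/(2n) for i <> j, because a nonnegative G_ij with
   p_ij < 1 satisfies G_ij < 1/(4n).  Hence the loss is at most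
   4 + 4d(1+c)c^2 <= 4 + 10 c^3 d <= Delta n / 2. *)

HB.instance Definition _ := Monoid.isComLaw.Build R 0 Rplus
  (fun x y z => esym (Rplus_assoc x y z)) Rplus_comm Rplus_0_l.
HB.instance Definition _ := Monoid.isComLaw.Build R 1 Rmult
  (fun x y z => esym (Rmult_assoc x y z)) Rmult_comm Rmult_1_l.
HB.instance Definition _ := Monoid.isMulLaw.Build R 0 Rmult Rmult_0_l Rmult_0_r.
HB.instance Definition _ :=
  Monoid.isAddLaw.Build R Rmult Rplus Rmult_plus_distr_r Rmult_plus_distr_l.

Section BigR.
Variable J : finType.
Implicit Types (P Q : pred J) (F G : J -> R).

Lemma leR_sum P F G : (forall i, P i -> F i <= G i) ->
  \big[Rplus/0]_(i | P i) F i <= \big[Rplus/0]_(i | P i) G i.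
Proof. by move=> FG; apply: (big_ind2 (fun x y => x <= y)) => // *; lra. Qed.

Lemma sumR_ge0 P F : (forall i, P i -> 0 <= F i) -> 0 <= \big[Rplus/0]_(i | P i) F i.
Proof. by move=> F0; apply: (big_ind (fun x => 0 <= x)) => // *; lra. Qed.

Lemma leR_sum_sub P Q F G :
  (forall i, P i -> Q i) -> (forall i, Q i -> 0 <= G i) -> (forall i, P i -> F i <= G i) ->
  \big[Rplus/0]_(i | P i) F i <= \big[Rplus/0]_(i | Q i) G i.
Proof.
move=> PQ G0 FG; rewrite (big_mkcond P) (big_mkcond Q); apply: leR_sum => i _.
case: (boolP (P i)) => Pi; first by rewrite (PQ _ Pi); apply: FG.
by case Qi: (Q i); [exact: G0 | lra].
Qed.

Lemma leR_sum_term P F x : P x -> (forall i, P i -> 0 <= F i) ->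
  F x <= \big[Rplus/0]_(i | P i) F i.
Proof.
move=> Px F0; rewrite (bigD1 x) //=.
suff : 0 <= \big[Rplus/0]_(i | P i && (i != x)) F i by lra.
by apply: sumR_ge0 => i /andP[/F0].
Qed.

Lemma prodR_in01 P F : (forall i, P i -> 0 <= F i <= 1) ->
  0 <= \big[Rmult/1]_(i | P i) F i <= 1.
Proof.
move=> F01; apply: (big_ind (fun x => 0 <= x <= 1)) => //; first lra.
by move=> x y hx hy; split; nra.
Qed.

Lemma sumR_const P x : \big[Rplus/0]_(i | P i) x = INR #|P| * x.
Proof.
rewrite -sum1_card (big_morph INR plus_INR (erefl (INR 0))) big_distrl.
by apply: eq_bigr => i _ /=; ring.
Qed.

Lemma cauchy_schwarz_sumR P F G :
  (\big[Rplus/0]_(k | P k) (F k * G k)) ^ 2 <=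
  (\big[Rplus/0]_(k | P k) (F k * F k)) * (\big[Rplus/0]_(k | P k) (G k * G k)).
Proof.
(* Lagrange's identity: the gap is half a sum of squares. *)
have : 0 <= \big[Rplus/0]_(k | P k) \big[Rplus/0]_(l | P l) (F k * G l - F l * G k) ^ 2.
  by apply: sumR_ge0 => k _; apply: sumR_ge0 => l _; apply: pow2_ge_0.
have -> : \big[Rplus/0]_(k | P k) \big[Rplus/0]_(l | P l) (F k * G l - F l * G k) ^ 2 =
  \big[Rplus/0]_(k | P k) \big[Rplus/0]_(l | P l) (F k * F k * (G l * G l))
  + \big[Rplus/0]_(k | P k) \big[Rplus/0]_(l | P l) (G k * G k * (F l * F l))
  + \big[Rplus/0]_(k | P k) \big[Rplus/0]_(l | P l) (-2 * (F k * G k) * (F l * G l)).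
  rewrite -!big_split; apply: eq_bigr => k _; rewrite -!big_split.
  by apply: eq_bigr => l _ /=; ring.
rewrite -!big_distrlr -big_distrr /=; nra.
Qed.

End BigR.

Section Dot.
Variable d : nat.
Implicit Types u v : 'I_d -> R.

Lemma dotRC u v : dotR u v = dotR v u.
Proof. by apply: eq_bigr => k _; rewrite Rmult_comm. Qed.

Lemma dotR_self_ge0 u : 0 <= dotR u u.
Proof. by apply: sumR_ge0 => k _; apply: Rle_0_sqr. Qed.

Lemma normR_ge0 u : 0 <= normR u.
Proof. exact: sqrt_pos. Qed.

Lemma normR_mul_self u : normR u * normR u = dotR u u.
Proof. exact/sqrt_sqrt/dotR_self_ge0. Qed.

Lemma abs_dotR_le u v : Rabs (dotR u v) <= normR u * normR v.
Proof.
have uv0 : 0 <= normR u * normR v by apply: Rmult_le_pos; apply: normR_ge0.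
rewrite -(Rabs_pos_eq _ uv0); apply: Rsqr_le_abs_0; rewrite /Rsqr.
have -> : normR u * normR v * (normR u * normR v) = dotR u u * dotR v v.
  by rewrite -!normR_mul_self; ring.
by have := cauchy_schwarz_sumR predT u v; rewrite /= Rmult_1_r.
Qed.

End Dot.

Section Edges.
Variables (I : finType) (d : nat) (W : I -> 'I_d -> R).

Lemma edgeP_in01 i j : 0 <= edgeP W i j <= 1.
Proof. by rewrite /edgeP /Rmax /Rmin; repeat case: Rle_dec; lra. Qed.

Lemma edgeP_ge0 i j : 0 <= edgeP W i j.
Proof. by case: (edgeP_in01 i j). Qed.

Lemma edgePC i j : edgeP W i j = edgeP W j i.
Proof. by rewrite /edgeP dotRC. Qed.

Lemma edgeP_dot_ge1 i j : 1 <= dotR (W i) (W j) -> edgeP W i j = 1.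
Proof. by rewrite /edgeP /Rmax /Rmin => ?; repeat case: Rle_dec; lra. Qed.

Lemma edgeP_le_normR i j : edgeP W i j <= normR (W i) * normR (W j).
Proof.
have := abs_dotR_le (W i) (W j); have := Rle_abs (dotR (W i) (W j)).
have : 0 <= normR (W i) * normR (W j) by apply: Rmult_le_pos; apply: normR_ge0.
by rewrite /edgeP /Rmax /Rmin; repeat case: Rle_dec; lra.
Qed.

Lemma pairP_in01 e : 0 <= pairP W e <= 1.
Proof. by rewrite /pairP; case: (enum e) => [|a [|b [|x s]]]; try lra; exact: edgeP_in01. Qed.

Lemma pairP_set2 i j : i != j -> pairP W [set i; j] = edgeP W i j.
Proof.
move=> ij; rewrite /pairP.
have hp : perm_eq (enum [set i; j]) [:: i; j].
  apply: uniq_perm; rewrite ?enum_uniq //= ?inE ?ij // => x.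
  by rewrite mem_enum !inE.
move: (perm_size hp) (perm_uniq hp) (perm_mem hp).
case: (enum _) => [|a [|b [|x s]]] //= _; rewrite !inE ij !andbT => ab mem_ab.
have := mem_ab a; have := mem_ab b; rewrite !inE !eqxx orbT /=.
move=> /esym /orP[]/eqP eqb /esym /orP[]/eqP eqa; subst a b; rewrite ?eqxx // in ab.
exact: edgePC.
Qed.

Lemma expDegree_subset (S S' : {set I}) i : S \subset S' ->
  expDegree W S i <= expDegree W S' i.
Proof.
move=> SS'; apply: leR_sum_sub => [j /andP[/(subsetP SS') -> ->] // | j _ | j _].
- exact: edgeP_ge0.
- exact: Rle_refl.
Qed.

End Edges.

Section TriangleExpectation.
Variables (I : finType) (d : nat) (W : I -> 'I_d -> R).

Definition triples (S : {set I}) : {set {set I}} :=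
  [set T : {set I} | (T \subset S) && (#|T| == 3%N)].

Definition triangleP (T : {set I}) : R := \big[Rmult/1]_(e in pairs T) pairP W e.

Lemma triangleP_ge0 T : 0 <= triangleP T.
Proof. by case: (@prodR_in01 _ (mem (pairs T)) _ (fun e _ => pairP_in01 W e)). Qed.

Lemma pairsS (T S : {set I}) : T \subset S -> pairs T \subset pairs S.
Proof.
move=> TS; apply/subsetP => e; rewrite !inE => /andP[eT ->].
by rewrite (subset_trans eT TS).
Qed.

(* Summing out the pairs outside F: each contributes p + (1 - p) = 1. *)
Lemma sum_prob_supset (P F : {set {set I}}) : F \subset P ->
  \big[Rplus/0]_(E in powerset P | F \subset E)
     \big[Rmult/1]_(e in P) (if e \in E then pairP W e else 1 - pairP W e)
  = \big[Rmult/1]_(e in F) pairP W e.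
Proof.
move=> FP.
pose A e := if e \in P then pairP W e else 0.
pose B e := if e \in P then (if e \in F then 0 else 1 - pairP W e) else 1.
have -> : \big[Rmult/1]_(e in F) pairP W e = \big[Rmult/1]_e (A e + B e).
  rewrite big_mkcond; apply: eq_bigr => e _; rewrite /A /B.
  case: (boolP (e \in F)) => eF; first by rewrite (subsetP FP _ eF); ring.
  by case: (e \in P); ring.
rewrite bigA_distr big_mkcond; apply: eq_bigr => E _ /=.
case: (boolP (E \subset P)) => EP; last first.
  case/subsetPn: (EP) => e eE eP.
  by rewrite powersetE (negbTE EP) /= (bigD1 e) //= /A eE (negbTE eP) Rmult_0_l.
rewrite powersetE EP /=; case: (boolP (F \subset E)) => FE; last first.
  case/subsetPn: FE => e eF eE.
  by rewrite /= (bigD1 e) //= /B (negbTE eE) (subsetP FP _ eF) eF Rmult_0_l.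
rewrite big_mkcond; apply: eq_bigr => e _; rewrite /A /B.
case eP: (e \in P); case eE: (e \in E) => //.
- by case eF: (e \in F) => //; rewrite (subsetP FE _ eF) in eE.
- by rewrite (subsetP EP _ eE) in eP.
Qed.

Lemma expTrianglesE S : expTriangles W S = \big[Rplus/0]_(T in triples S) triangleP T.
Proof.
have card_triangles E : INR #|triangles S E| =
    \big[Rplus/0]_(T | (T \in triples S) && (pairs T \subset E)) 1.
  rewrite sumR_const Rmult_1_r; congr INR; apply: eq_card => T; rewrite !inE.
  have -> : [forall e : {set I}, (e \subset T) && (#|e| == 2%N) ==> (e \in E)] =
            (pairs T \subset E).
    apply/forallP/subsetP => h e; first by rewrite inE => he; exact: (implyP (h e) he).
    by apply/implyP => he; apply: h; rewrite inE.
  by rewrite unfold_in /= inE andbA.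
rewrite /expTriangles; under eq_bigr do rewrite card_triangles big_distrr /=.
rewrite (exchange_big_dep (fun T => T \in triples S)) /=; last by move=> E T _ /andP[].
apply: eq_bigr => T TS; under eq_bigl do rewrite TS /=.
under eq_bigr do rewrite Rmult_1_r.
by apply/sum_prob_supset/pairsS; move: TS; rewrite inE => /andP[].
Qed.

Lemma expTriangles_split S :
  expTriangles W [set: I] = expTriangles W S +
    \big[Rplus/0]_(T | (T \in triples [set: I]) && ~~ (T \subset S)) triangleP T.
Proof.
rewrite !expTrianglesE (bigID (fun T : {set I} => T \subset S)) /=; congr (_ + _).
by apply: eq_bigl => T; rewrite !inE subsetT andbC.
Qed.

End TriangleExpectation.

Section TrianglesThroughVertex.
Variables (I : finType) (d : nat) (W : I -> 'I_d -> R).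

Lemma triangleP_le i j k : i != j -> i != k -> j != k ->
  triangleP W (i |: [set j; k]) <= edgeP W i j * edgeP W i k.
Proof.
move=> ij ik jk; set T := i |: [set j; k].
have pairT x y : x != y -> x \in T -> y \in T -> [set x; y] \in pairs T.
  move=> xy hx hy; rewrite inE cards2 xy andbT.
  by apply/subsetP => z; rewrite in_set2 => /orP[]/eqP->.
have iT : i \in T by rewrite !inE eqxx.
have jT : j \in T by rewrite !inE eqxx orbT.
have kT : k \in T by rewrite !inE eqxx !orbT.
have ikj : [set i; k] != [set i; j].
  apply/eqP => h; have : k \in [set i; j] by rewrite -h !inE eqxx orbT.
  by rewrite !inE (eq_sym k i) (negbTE ik) (eq_sym k j) (negbTE jk).
rewrite /triangleP (bigD1 [set i; j]) /=; last exact: pairT.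
rewrite (bigD1 [set i; k]) /=; last by rewrite pairT.
rewrite !pairP_set2 //; set rest := \big[Rmult/1]_(e | _) _.
have : 0 <= rest <= 1 by apply: prodR_in01 => e _; apply: pairP_in01.
have := edgeP_in01 W i j; have := edgeP_in01 W i k => ik01 ij01 rest01.
by apply: Rmult_le_compat_l; nra.
Qed.

(* Each triangle through [i] is [i |: [set j; k]] for a pair [(j, k)] of other
   vertices. *)
Lemma sum_triangleP_through i (Q : pred {set I}) :
  \big[Rplus/0]_(T | (T \in triples [set: I]) && ((i \in T) && Q T)) triangleP W T <=
  \big[Rplus/0]_(p : I * I | (p.1 != i) && (p.2 != i) && Q (i |: [set p.1; p.2]))
      (edgeP W i p.1 * edgeP W i p.2).
Proof.
rewrite (partition_big (fun p : I * I => i |: [set p.1; p.2]) predT) //=.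
apply: leR_sum_sub => [T _ // | T _ | T /andP[T3 /andP[iT QT]]].
  by apply: sumR_ge0 => p _; apply: Rmult_le_pos; apply: edgeP_ge0.
move: T3; rewrite inE subsetT /= (cardsD1 i T) iT add1n eqSS.
case/cards2P => j [k [jk Tjk]].
have : j \in T :\ i by rewrite Tjk !inE eqxx.
have : k \in T :\ i by rewrite Tjk !inE eqxx orbT.
rewrite !inE => /andP[ki _] /andP[ji _].
have defT : i |: [set j; k] = T by rewrite -Tjk setD1K.
apply: Rle_trans (leR_sum_term (x := (j, k)) _ _).
- by rewrite -defT; apply: triangleP_le; rewrite // eq_sym.
- by rewrite /= ji ki defT QT eqxx.
- by move=> p _; apply: Rmult_le_pos; apply: edgeP_ge0.
Qed.

End TrianglesThroughVertex.

Section Gram.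
Variables (I : finType) (d : nat) (w : I -> 'I_d -> R) (L : {set I}).

Lemma sum_gram_ge0 : 0 <= \big[Rplus/0]_(i in L) \big[Rplus/0]_(j in L) dotR (w i) (w j).
Proof.
have -> : \big[Rplus/0]_(i in L) \big[Rplus/0]_(j in L) dotR (w i) (w j) =
   \big[Rplus/0]_(k < d) ((\big[Rplus/0]_(i in L) w i k) * (\big[Rplus/0]_(j in L) w j k)).
  under eq_bigr do rewrite /dotR exchange_big.
  by rewrite exchange_big; apply: eq_bigr => k _; rewrite big_distrlr.
by apply: sumR_ge0 => k _; apply: Rle_0_sqr.
Qed.

(* The Gram matrix of unit vectors has trace #|L| and rank at most d; this is
   Cauchy-Schwarz for tr M and the Frobenius norm of M := \sum_(i in L) w i (w i)^T. *)
Lemma card_sq_le_gram : (forall i, i \in L -> dotR (w i) (w i) = 1) ->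
  INR #|L| * INR #|L| <=
  INR d * \big[Rplus/0]_(i in L) \big[Rplus/0]_(j in L) (dotR (w i) (w j) * dotR (w i) (w j)).
Proof.
move=> unit_w; pose M k l := \big[Rplus/0]_(i in L) (w i k * w i l).
have frobeniusE : \big[Rplus/0]_(i in L) \big[Rplus/0]_(j in L)
      (dotR (w i) (w j) * dotR (w i) (w j)) =
    \big[Rplus/0]_(k < d) \big[Rplus/0]_(l < d) (M k l * M k l).
  transitivity (\big[Rplus/0]_(i in L) \big[Rplus/0]_(j in L) \big[Rplus/0]_(k < d)
     \big[Rplus/0]_(l < d) (w i k * w i l * (w j k * w j l))).
    apply: eq_bigr => i _; apply: eq_bigr => j _; rewrite /dotR big_distrlr.
    by apply: eq_bigr => k _; apply: eq_bigr => l _ /=; ring.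
  under eq_bigr do rewrite exchange_big.
  rewrite exchange_big; apply: eq_bigr => k _.
  under eq_bigr do rewrite exchange_big.
  by rewrite exchange_big; apply: eq_bigr => l _; rewrite big_distrlr.
have traceE : INR #|L| = \big[Rplus/0]_(k < d) (1 * M k k).
  rewrite -[INR _]Rmult_1_r -sumR_const.
  rewrite (eq_bigr (fun i => dotR (w i) (w i))) => [|i /unit_w //].
  rewrite exchange_big; apply: eq_bigr => k _; rewrite Rmult_1_l.
  by apply: eq_bigr.
have := cauchy_schwarz_sumR predT (fun _ : 'I_d => 1) (fun k => M k k).
rewrite -traceE sumR_const card_ord /= !Rmult_1_r frobeniusE => cs.
apply: Rle_trans cs _; apply: Rmult_le_compat_l; first exact: pos_INR.
by apply: leR_sum => k _; apply: leR_sum_term => // l _; apply: Rle_0_sqr.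
Qed.

End Gram.

Definition unitR (d : nat) (u : 'I_d -> R) : 'I_d -> R := fun k => u k / normR u.

Lemma dotR_unitR (d : nat) (u v : 'I_d -> R) : 0 < normR u -> 0 < normR v ->
  dotR (unitR u) (unitR v) = dotR u v / (normR u * normR v).
Proof.
move=> u0 v0; rewrite /dotR /Rdiv big_distrl; apply: eq_bigr => k _ /=.
by rewrite /unitR; field; lra.
Qed.

Lemma dotR_unitR_self (d : nat) (u : 'I_d -> R) : 0 < normR u -> dotR (unitR u) (unitR u) = 1.
Proof. by move=> u0; rewrite dotR_unitR // -normR_mul_self; field; lra. Qed.

Section LongVectors.
Variables (I : finType) (d : nat) (W : I -> 'I_d -> R).

(* [g] is the cosine of the angle between [W i] and [W j].  The only nontrivial
   case is [0 <= g] with [g * |W i| * |W j| = dotR (W i) (W j) < 1], so [g < 1/a]. *)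
Lemma cos_sqr_add_le_edgeP i j (a : R) : 0 < a -> a < normR (W i) * normR (W j) ->
  let g := dotR (unitR (W i)) (unitR (W j)) in
  g * g + g <= 2 * edgeP W i j + 2 / a.
Proof.
move=> a0 aq g.
have [i0 j0] : 0 < normR (W i) /\ 0 < normR (W j).
  by have := normR_ge0 (W i); have := normR_ge0 (W j); split; nra.
have q0 : 0 < normR (W i) * normR (W j) by apply: Rmult_lt_0_compat.
have gE : g * (normR (W i) * normR (W j)) = dotR (W i) (W j).
  by rewrite /g dotR_unitR //; field; lra.
have g_abs : Rabs g <= 1.
  have := abs_dotR_le (W i) (W j); rewrite -gE Rabs_mult (Rabs_pos_eq _ (Rlt_le _ _ q0)).
  by move=> h; apply: (Rmult_le_reg_r _ _ _ q0); lra.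
have := Rle_abs g; have := Rle_abs (- g); rewrite Rabs_Ropp => g_ge g_le.
have ia0 : 0 < / a by apply: Rinv_0_lt_compat.
have p0 := edgeP_ge0 W i j.
case: (Rle_dec 1 (dotR (W i) (W j))) => [x1 | /Rnot_le_lt x1].
  by rewrite edgeP_dot_ge1 //; rewrite /Rdiv; nra.
case: (Rle_dec 0 g) => [g0 | /Rnot_le_lt g0]; last by rewrite /Rdiv; nra.
have g_lt : g < / a.
  by apply: (Rmult_lt_reg_r a) => //; rewrite Rinv_l; nra.
by rewrite /Rdiv; nra.
Qed.

Variables (n : nat) (c : R).
Hypothesis n_gt0 : 0 < INR n.
Hypothesis d_le_n : (d <= n)%nat.
Hypothesis c_ge0 : 0 <= c.
Hypothesis expDegree_le : forall i, expDegree W [set: I] i <= c.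
Variable L : {set I}.
Hypothesis long_L : forall i, i \in L -> 2 * sqrt (INR n) < normR (W i).

Let g i j := dotR (unitR (W i)) (unitR (W j)).

Lemma long_normR_gt0 i : i \in L -> 0 < normR (W i).
Proof. by move=> /long_L; have := sqrt_pos (INR n); lra. Qed.

Lemma sum_gram_row_le i : i \in L ->
  \big[Rplus/0]_(j in L) (g i j * g i j + g i j) <= 2 + 2 * c + INR #|L| / (2 * INR n).
Proof.
move=> iL; rewrite (bigD1 i) //= /g (dotR_unitR_self (long_normR_gt0 iL)).
suff : \big[Rplus/0]_(j in L | j != i) (g i j * g i j + g i j) <=
       2 * c + INR #|L| * (2 / (4 * INR n)).
  by rewrite /g /Rdiv (_ : 2 * / (4 * INR n) = / (2 * INR n)); [lra | field; lra].
apply: (@Rle_trans _ (\big[Rplus/0]_(j in L | j != i)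
   (2 * edgeP W i j + 2 / (4 * INR n)))).
  apply: leR_sum => j /andP[jL ji]; apply: cos_sqr_add_le_edgeP; first lra.
  have := sqrt_sqrt (INR n) (Rlt_le _ _ n_gt0); have := sqrt_pos (INR n).
  have := long_L iL; have := long_L jL; nra.
rewrite big_split /= -big_distrr /=; apply: Rplus_le_compat.
  apply: Rmult_le_compat_l; first lra; apply: Rle_trans (expDegree_le i).
  apply: leR_sum_sub => [j /andP[_ ->] | j _ | j _]; rewrite ?in_setT //.
  - exact: edgeP_ge0.
  - exact: Rle_refl.
rewrite -sumR_const; apply: leR_sum_sub => [j /andP[] // | j _ | j _]; last exact: Rle_refl.
have : 0 < / (4 * INR n) by apply: Rinv_0_lt_compat; lra.
rewrite /Rdiv; lra.
Qed.

Lemma card_long_le : INR #|L| <= 4 * INR d * (1 + c).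
Proof.
set m := INR #|L|; have m0 : 0 <= m := pos_INR _.
have frob : \big[Rplus/0]_(i in L) \big[Rplus/0]_(j in L) (g i j * g i j) <=
            m * (2 + 2 * c + m / (2 * INR n)).
  have := sum_gram_ge0 (fun i => unitR (W i)) L.
  have : \big[Rplus/0]_(i in L) \big[Rplus/0]_(j in L) (g i j * g i j + g i j) <=
         \big[Rplus/0]_(i in L) (2 + 2 * c + m / (2 * INR n)).
    by apply: leR_sum => i; apply: sum_gram_row_le.
  rewrite sumR_const -/m; under eq_bigr do rewrite big_split.
  by rewrite big_split /= /g; lra.
have := card_sq_le_gram (w := fun i => unitR (W i))
  (fun i iL => dotR_unitR_self (long_normR_gt0 iL)); rewrite -/m => trace.
have d_n : INR d <= INR n by apply/le_INR/leP.
(* [d <= n] makes the [m^2 / (2n)] term at most [m^2 / 2]. *)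
have : m * m <= m * (4 * INR d * (1 + c)).
  have : INR d * (m * (m / (2 * INR n))) <= m * m / 2.
    rewrite /Rdiv Rinv_mult; have : 0 < / INR n by apply: Rinv_0_lt_compat.
    have : INR d * / INR n <= 1.
      by apply: (Rmult_le_reg_r (INR n)) => //; rewrite Rmult_assoc Rinv_l; lra.
    have := pos_INR d; nra.
  have : m * m <= INR d * (m * (2 + 2 * c + m / (2 * INR n))).
    by apply: Rle_trans trace _; apply: Rmult_le_compat_l => //; apply: pos_INR.
  lra.
have := pos_INR d; case: (Rle_lt_or_eq_dec _ _ m0) => [m_gt0 | <-]; last nra.
by move=> _; apply: Rmult_le_reg_l.
Qed.

End LongVectors.

Section LostTriangles.
Variables (I : finType) (d : nat) (W : I -> 'I_d -> R) (n : nat) (c : R).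
Hypothesis n_gt0 : 0 < INR n.
Hypothesis card_I_le : (#|I| <= n)%nat.
Hypothesis expDegree_le : forall i, expDegree W [set: I] i <= c.
Variables not_short not_long : pred I.
Hypothesis short_normR : forall i, ~~ not_short i -> normR (W i) <= / (INR n ^ 2).
Hypothesis not_long_normR : forall i, not_long i -> normR (W i) <= 2 * sqrt (INR n).

Let kept := [set i | not_short i && not_long i].

Definition charged i (T : {set I}) :=
  ~~ not_long i || ~~ not_short i && [forall x in T, not_long x].

Let charged_sum i :=
  \big[Rplus/0]_(T | (T \in triples [set: I]) && ((i \in T) && charged i T)) triangleP W T.

Lemma lost_le_charged :
  \big[Rplus/0]_(T | (T \in triples [set: I]) && ~~ (T \subset kept)) triangleP W T <=
  \big[Rplus/0]_i charged_sum i.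
Proof.
rewrite /charged_sum -(exchange_big_dep predT) //=.
apply: leR_sum_sub => [T /andP[] // | T _ | T /andP[T3 not_kept]].
  by apply: sumR_ge0 => i _; apply: triangleP_ge0.
suff [x xT chx] : exists2 x, x \in T & charged x T.
  by apply: (leR_sum_term (x := x)); rewrite ?xT // => i _; apply: triangleP_ge0.
case: (boolP [forall x in T, not_long x]) => [all_long | /forall_inPn [x xT nlx]].
  case/subsetPn: not_kept => x xT; rewrite inE (forall_inP all_long x xT) andbT => sx.
  by exists x; rewrite // /charged all_long sx orbT.
by exists x; rewrite // /charged nlx.
Qed.

Lemma sum_triangleP_through_le_deg i (Q : pred {set I}) :
  \big[Rplus/0]_(T | (T \in triples [set: I]) && ((i \in T) && Q T)) triangleP W T <= c * c.
Proof.
apply: Rle_trans (sum_triangleP_through W i Q) _.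
apply: (@Rle_trans _ (\big[Rplus/0]_(j | j != i) \big[Rplus/0]_(k | k != i)
                        (edgeP W i j * edgeP W i k))).
  rewrite pair_big; apply: leR_sum_sub => [p /andP[] // | p _ | p _].
  - by apply: Rmult_le_pos; apply: edgeP_ge0.
  - exact: Rle_refl.
rewrite -big_distrlr /=.
have degE : \big[Rplus/0]_(j | j != i) edgeP W i j = expDegree W [set: I] i.
  by apply: eq_bigl => j; rewrite in_setT.
rewrite degE; have := expDegree_le i.
have : 0 <= expDegree W [set: I] i by apply: sumR_ge0 => j _; apply: edgeP_ge0.
nra.
Qed.

(* A short vertex has edge probability at most [n^-2 * 2 sqrt n] to a vertex that
   is not long, and lies on at most [n^2] triangles. *)
Lemma charged_short_le i : not_long i -> ~~ not_short i -> charged_sum i <= 4 / INR n.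
Proof.
move=> nli si; apply: Rle_trans (sum_triangleP_through W i (charged i)) _.
set a := / (INR n ^ 2) * (2 * sqrt (INR n)).
have sqrt_n := sqrt_sqrt (INR n) (Rlt_le _ _ n_gt0); have := sqrt_pos (INR n).
have : 0 < / (INR n ^ 2) by apply/Rinv_0_lt_compat/pow_lt.
move=> n2 sqrt_ge0; have a0 : 0 <= a by rewrite /a; nra.
have edge_le j : not_long j -> edgeP W i j <= a.
  move=> nlj; apply: Rle_trans (edgeP_le_normR W i j) _.
  have := normR_ge0 (W i); have := normR_ge0 (W j).
  have := short_normR si; have := not_long_normR nlj.
  by move=> *; apply: Rmult_le_compat.
apply: (@Rle_trans _ (\big[Rplus/0]_(p : I * I) (a * a))).
  apply: leR_sum_sub => // p; first by move=> _; nra.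
  rewrite /charged nli /= => /andP[_ /andP[_ /forall_inP nl_T]].
  have := edge_le _ (nl_T p.1 _); have := edge_le _ (nl_T p.2 _).
  rewrite !inE !eqxx !orbT => /(_ isT) e2 /(_ isT) e1.
  by have := edgeP_ge0 W i p.1; have := edgeP_ge0 W i p.2; move=> *; apply: Rmult_le_compat.
rewrite sumR_const (eq_card (B := [set: I * I])) => [|p]; last by rewrite inE.
rewrite cardsT card_prod mult_INR.
have : INR #|I| <= INR n by apply/le_INR/leP.
have aaE : a * a = 4 / INR n ^ 3.
  rewrite /a (_ : forall x y, x * y * (x * y) = x * x * (y * y)); last by move=> *; ring.
  by rewrite (_ : 2 * sqrt (INR n) * (2 * sqrt (INR n)) = 4 * INR n); [field; lra | nra].
rewrite aaE (_ : 4 / INR n = INR n * INR n * (4 / INR n ^ 3)); last by field; lra.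
have : 0 <= 4 / INR n ^ 3 by rewrite -aaE; nra.
have := pos_INR #|I|; move=> *; apply: Rmult_le_compat_r => //.
by apply: Rmult_le_compat.
Qed.

Lemma sum_charged_le :
  \big[Rplus/0]_i charged_sum i <= 4 + INR #|[set i | ~~ not_long i]| * (c * c).
Proof.
have four_n : 0 <= 4 / INR n by apply: Rmult_le_pos; [lra | apply/Rlt_le/Rinv_0_lt_compat].
apply: (@Rle_trans _ (\big[Rplus/0]_i (if not_long i then 4 / INR n else c * c))).
  apply: leR_sum => i _; case nli: (not_long i); last exact: sum_triangleP_through_le_deg.
  case: (boolP (not_short i)) => [nsi | si]; last exact: charged_short_le.
  by rewrite /charged_sum big_pred0 => [|T]; [done | rewrite /charged nli nsi /= !andbF].
rewrite (bigID not_long) /=.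
rewrite (eq_bigr (fun _ => 4 / INR n)) => [|i ->] //.
rewrite [X in _ + X](eq_bigr (fun _ => c * c)) => [|i /negbTE ->] //.
rewrite !sumR_const.
have -> : #|(fun i => ~~ not_long i)| = #|[set i | ~~ not_long i]|.
  by apply: eq_card => i; rewrite inE.
suff : INR #|not_long| * (4 / INR n) <= 4 by lra.
have : INR #|not_long| <= INR n by apply/le_INR/leP; apply: leq_trans (max_card _) _.
move=> card_le; apply: (@Rle_trans _ (INR n * (4 / INR n))); first exact: Rmult_le_compat_r.
by right; field; lra.
Qed.

End LostTriangles.

Theorem mainTheorem6 (n d : nat) (c Delta : R) (I : finType)
  (V : I -> 'I_d -> R) :
  (2 <= n)%nat -> 4 <= c -> 0 < Delta -> (d <= n)%nat -> (#|I| <= n)%nat ->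
  (forall i : I, expDegree V [set: I] i <= c) ->
  Delta * INR n <= expTriangles V [set: I] ->
  10 * c ^ 3 * INR d <= Delta * INR n / (lg (INR n)) ^ 2 ->
  Delta * INR n / (lg (INR n)) ^ 2 + 4 <= Delta * INR n / 2 ->
  let V' := [set i : I | (if Rle_dec (/ (INR n ^ 2)) (normR (V i)) then true else false)
                          && (if Rle_dec (normR (V i)) (2 * sqrt (INR n)) then true else false)] in
  (forall i : I, i \in V' -> expDegree V V' i <= c) /\
  Delta * INR n / 2 <= expTriangles V V'.
Proof.
move=> n_ge2 c_ge4 _ d_le_n card_I_le deg_le tri_ge cubic_le lg_le V'.
have n_gt0 : 0 < INR n by apply/lt_0_INR/ltP; apply: leq_trans n_ge2.
split=> [i _ | ]; first exact: Rle_trans (expDegree_subset V i (subsetT V')) (deg_le i).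
pose not_short i := if Rle_dec (/ (INR n ^ 2)) (normR (V i)) then true else false.
pose not_long i := if Rle_dec (normR (V i)) (2 * sqrt (INR n)) then true else false.
have short_le i : ~~ not_short i -> normR (V i) <= / (INR n ^ 2).
  by rewrite /not_short; case: Rle_dec => // /Rnot_le_lt lt _; apply: Rlt_le.
have not_long_le i : not_long i -> normR (V i) <= 2 * sqrt (INR n).
  by rewrite /not_long; case: Rle_dec.
have long_gt i : i \in [set i | ~~ not_long i] -> 2 * sqrt (INR n) < normR (V i).
  by rewrite inE /not_long; case: Rle_dec => // /Rnot_le_lt lt _.
have lost := Rle_trans _ _ _ (lost_le_charged V not_short not_long)
                             (sum_charged_le n_gt0 card_I_le deg_le short_le not_long_le).
have m_le := card_long_le n_gt0 d_le_n (Rle_trans 0 4 c ltac:(lra) c_ge4) deg_le long_gt.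
have m_c2 : INR #|[set i | ~~ not_long i]| * (c * c) <= 10 * c ^ 3 * INR d.
  apply: Rle_trans (Rmult_le_compat_r _ _ _ (Rle_0_sqr c) m_le) _; rewrite /Rsqr.
  have : 0 <= INR d * (c * c) * (6 * c - 4).
    by apply: Rmult_le_pos; [apply: Rmult_le_pos; [exact: pos_INR | nra] | lra].
  have : 10 * c ^ 3 * INR d - 4 * INR d * (1 + c) * (c * c) =
         INR d * (c * c) * (6 * c - 4) by ring.
  lra.
change [set i | not_short i && not_long i] with V' in lost.
have := expTriangles_split V V'; lra.
Qed.
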